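(* Let $u\in(\mathbb{N}\cup\{0\})^m$ and put $M:=\{x\in\mathbb{R}^m:0\leq x\leq u\}$ (entrywise order) with the metric induced by $\|\cdot\|_\infty$. Every optimal code $C$ in $(M,\|\cdot\|_\infty)$ of size $\prod_{i=1}^m(u_i+1)-1$ admits a decomposition $C=A\sqcup B$ for which there exists $i\in\{1,\ldots,m\}$ such that $|A|=\prod_{s=1}^m(u_s+1)-(u_i+1)$ and $|B|=u_i$, and furthermore $A\subseteq M\cap\mathbb{Z}^m$ and $B\subseteq\{x+te_i:t\in\mathbb{R}\}$ for some $x\in\mathbb{Z}^m$.
   Context: For a finite $C\subseteq M$, $\delta(C):=\min\{\|x-y\|_\infty:x,y\in C,x\neq y\}$. An optimal code of size $n$ is an $n$-element subset of $M$ maximizing $\delta$ among all $n$-element subsets. $e_i$ denotes the $i$th standard basis vector. *)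

From HB Require Import structures.
From mathcomp Require Import all_boot all_order all_algebra.
From mathcomp Require Import finmap.
From mathcomp Require Import reals.
Set Implicit Arguments. Unset Strict Implicit. Unset Printing Implicit Defensive.
Import Order.TTheory GRing.Theory Num.Theory.
Local Open Scope ring_scope.
Local Open Scope fset_scope.

Definition sup_dist (R : realType) (m : nat) (x y : 'rV[R]_m) : R :=
  \big[Num.max/0]_(j < m) `|x 0 j - y 0 j|.

Definition in_box (R : realType) (m : nat) (u : 'I_m -> nat) (x : 'rV[R]_m) : Prop :=
  forall j : 'I_m, 0 <= x 0 j <= (u j)%:R.

(* minimum distance delta(C) of a finite set; convention 0 if |C| <= 1 *)
Definition delta (R : realType) (m : nat) (C : {fset 'rV[R]_m}) : R :=
  match [seq sup_dist p.1 p.2 | p <- [seq (x, y) | x <- C, y <- C] & p.1 != p.2] with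
  | [::] => 0
  | d :: ds => \big[Num.min/d]_(e <- ds) e
  end.

Definition is_code (R : realType) (m : nat) (u : 'I_m -> nat) (C : {fset 'rV[R]_m}) : Prop :=
  forall x, x \in C -> in_box u x.

Definition optimal_code (R : realType) (m : nat) (u : 'I_m -> nat) (n : nat)
  (C : {fset 'rV[R]_m}) : Prop :=
  [/\ is_code u C, #|` C| = n &
      forall C' : {fset 'rV[R]_m}, is_code u C' -> #|` C'| = n -> delta C' <= delta C].

Definition int_point (R : realType) (m : nat) (x : 'rV[R]_m) : Prop :=
  exists k : 'I_m -> int, forall j, x 0 j = (k j)%:~R.

From HB Require Import structures.
From mathcomp Require Import all_boot all_order all_algebra.
From mathcomp Require Import finmap.
From mathcomp Require Import reals lra zify.
Import Order.TTheory GRing.Theory Num.Theory.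
Local Open Scope ring_scope.
Local Open Scope fset_scope.
Set Implicit Arguments. Unset Strict Implicit. Unset Printing Implicit Defensive.

(* If two sides of the box are positive, the grid M ∩ Z^m minus one point is a
   code of the same size with minimum distance 1, so delta(C) >= 1.  Then every
   rounding rule (each coordinate rounded down or up) maps C injectively into
   the grid, so it misses exactly one grid point, its gap.  Switching the rule
   in coordinate j from floor to ceiling moves precisely the points with a
   non-integral j-th coordinate one step up along e_j; chasing this move through
   the bijection shows that the gap lies on the e_j-line of the rounding of any
   such point, above it.  Comparing the gaps of rules differing in one
   coordinate shows that non-integral coordinates occur in a single direction
   i.  The points of C on the e_i-line through the all-floor gap then fill the
   u_i other grid points of that line, and all remaining points are grid
   points.  If at most one side is positive, M is a segment containing C. *)

Lemma fset_two_distinct (K : choiceType) (A : {fset K}) :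
  (1 < #|` A|)%N -> exists x y, [/\ x \in A, y \in A & x != y].
Proof.
have Auniq := fset_uniq A; have memA (z : K) : (z \in A) = (z \in enum_fset A) by [].
case E : (enum_fset A) Auniq => [|x [|y s]] //= /andP[+ _] _.
rewrite inE negb_or => /andP[xy _]; exists x, y.
by rewrite !memA E !inE !eqxx ?orbT.
Qed.

Lemma imfset_predC1 (X : choiceType) (Y : finType) (C : {fset X}) (r : X -> Y) :
  {in C &, injective r} -> #|` C|.+1 = #|{: Y}| -> exists g : Y, r @` C =i predC1 g.
Proof.
move=> r_inj card_C.
have card_img : #|[pred z | z \in r @` C]| = #|` C|.
  rewrite -(eqP (introT (card_in_imfsetP _ _) r_inj)); exact/card_uniqP/fset_uniq.
have /card1P [g gP] : #|[predC [pred z | z \in r @` C]]| == 1%N.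
  have := cardC [pred z | z \in r @` C].
  by rewrite card_img -card_C -addn1 => /eqP; rewrite eqn_add2l eq_sym.
by exists g => z; have := gP z; rewrite !inE => <-; rewrite negbK.
Qed.

(* The chain r x, r' x = r y, r' y = r z, ... cannot repeat by injectivity of
   r', moves ahead at each step, and can only stop at the point g missed by r. *)
Lemma missing_ahead (X Y : choiceType) (C : {fset X}) (r r' : X -> Y) (g : Y)
    (ahead : Y -> Y -> Prop) (mu : Y -> nat) :
  (forall a b c, ahead a b -> ahead b c -> ahead a c) ->
  (forall a b, ahead a b -> (mu a < mu b)%N) ->
  {in C &, injective r'} ->
  (forall z, z != g -> z \in r @` C) ->
  (forall y, y \in C -> r' y = r y \/ ahead (r' y) (r y)) ->
  forall x, x \in C -> r' x != r x -> ahead g (r x).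
Proof.
move=> ahead_trans mu_ahead r'_inj r_onto step x.
have [n] := ubnP (mu (r x)); elim: n x => // n IH x mu_x xC r'x.
have [r'xE|r'x_ahead] := step x xC; first by rewrite r'xE eqxx in r'x.
have [<-//|r'x_g] := eqVneq (r' x) g.
have /imfsetP [y /= yC r'xE] := r_onto _ r'x_g.
have r'y : r' y != r y.
  apply: contra r'x => /eqP r'yE; have xy : x = y by apply: r'_inj; rewrite ?r'xE.
  by rewrite xy r'yE.
have mu_y : (mu (r y) < n)%N by rewrite -r'xE (leq_trans (mu_ahead _ _ r'x_ahead)).
by apply: ahead_trans (IH y mu_y yC r'y) _; rewrite -r'xE.
Qed.

Section SupDistance.
Variables (R : realType) (m : nat).
Implicit Types (x y : 'rV[R]_m) (C : {fset 'rV[R]_m}).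

Lemma le_sup_dist x y j : `|x 0 j - y 0 j| <= sup_dist x y.
Proof. exact: le_bigmax. Qed.

Lemma sup_dist_lt1 x y : (forall j, `|x 0 j - y 0 j| < 1) -> sup_dist x y < 1.
Proof. by move=> lt1; apply: bigmax_lt => // j _; apply: lt1. Qed.

Definition pair_dists C : seq R :=
  [seq sup_dist p.1 p.2 | p <- [seq (x, y) | x <- C, y <- C] & p.1 != p.2].

Lemma pair_distsP C e : reflect
  (exists x y, [/\ x \in C, y \in C, x != y & e = sup_dist x y]) (e \in pair_dists C).
Proof.
apply: (iffP mapP) => [[[x y]] | [x [y [xC yC xy ->]]]].
  rewrite mem_filter /= => /andP [xy /allpairsP [[x' y'] [/= x'C y'C]]].
  by case=> ? ? ->; subst; exists x', y'.
by exists (x, y); rewrite // mem_filter xy; apply/allpairsP; exists (x, y).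
Qed.

Lemma delta_le C x y : x \in C -> y \in C -> x != y -> delta C <= sup_dist x y.
Proof.
move=> xC yC xy; have : sup_dist x y \in pair_dists C by apply/pair_distsP; exists x, y.
rewrite /delta -/(pair_dists C); case: pair_dists => [//|d ds].
by rewrite inE => /predU1P [->|?]; [apply: bigmin_le_id | apply: ge_bigmin_seq].
Qed.

Lemma delta_ge C (c : R) : (1 < #|` C|)%N ->
  (forall x y, x \in C -> y \in C -> x != y -> c <= sup_dist x y) -> c <= delta C.
Proof.
move=> /fset_two_distinct [x [y [xC yC xy]]] c_le.
have : sup_dist x y \in pair_dists C by apply/pair_distsP; exists x, y.
have : {in pair_dists C, forall e, c <= e}.
  by move=> e /pair_distsP [x' [y' [x'C y'C x'y' ->]]]; apply: c_le.
rewrite /delta -/(pair_dists C); case: pair_dists => [//|d ds] c_le_dists _.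
rewrite big_seq; apply: le_bigmin => [|e e_ds]; apply: c_le_dists.
  exact: mem_head.
by rewrite inE e_ds orbT.
Qed.

End SupDistance.

Section Grid.
Variables (m : nat) (u : 'I_m -> nat).

Definition grid := {dffun forall j : 'I_m, 'I_(u j).+1}.

Lemma card_grid : #|{: grid}| = (\prod_(j < m) (u j).+1)%N.
Proof.
by rewrite card_dep_ffun foldrE big_image; apply: eq_bigr => j _; rewrite card_ord.
Qed.

Lemma grid_eq (a b : grid) : (forall j, a j = b j :> nat) -> a = b.
Proof. by move=> ab; apply/ffunP => j; apply/val_inj/ab. Qed.

Definition below_along (j : 'I_m) (a b : grid) :=
  (forall l, l != j -> a l = b l) /\ (a j < b j)%N.

Lemma below_along_trans j a b c :
  below_along j a b -> below_along j b c -> below_along j a c.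
Proof.
move=> [ab_off ab_j] [bc_off bc_j]; split; last exact: ltn_trans bc_j.
by move=> l lj; rewrite ab_off ?bc_off.
Qed.

End Grid.

Section Rounding.
Variables (R : realType) (m : nat) (u : 'I_m -> nat).
Implicit Types (e : 'I_m -> bool) (x y : 'rV[R]_m).

Definition round_coord e x j : int :=
  if e j then Num.ceil (x 0 j) else Num.floor (x 0 j).

Definition round e x : grid u := [ffun j => inord `|round_coord e x j|%N].

Definition ceil_at e j : 'I_m -> bool := fun l => (l == j) || e l.

Lemma round_coord_floor e x j :
  round_coord e x j = (Num.floor (x 0 j) + (e j && (x 0 j \isn't a Num.int)))%R.
Proof. by rewrite /round_coord; case: (e j); rewrite ?ceil_floor ?addr0. Qed.

Lemma round_coord_bounds e x j : in_box u x -> 0 <= round_coord e x j <= (u j)%:Z.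
Proof.
move=> /(_ j) /andP [x_ge0 x_le]; rewrite /round_coord; case: (e j).
  by rewrite ceil_le_int x_le andbT ceil_ge0 (lt_le_trans _ x_ge0) ?ltrN10.
by rewrite floor_ge0 x_ge0 -(ler_int R) (le_trans (floor_le _)).
Qed.

Lemma roundE e x j : in_box u x -> (round e x j : nat)%:Z = round_coord e x j.
Proof.
move=> /(round_coord_bounds e j) /andP [ge0 le_u].
by rewrite ffunE inordK ?gez0_abs // ltnS -lez_nat gez0_abs.
Qed.

Lemma round_int e x j : in_box u x -> x 0 j \is a Num.int ->
  x 0 j = (round e x j : nat)%:R.
Proof.
move=> x_box x_int; have := roundE e j x_box.
by rewrite round_coord_floor x_int andbF addr0 => floorE; rewrite -[LHS](floorK x_int) -floorE.
Qed.

Lemma round_close e x y j : in_box u x -> in_box u y -> round e x = round e y ->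
  `|x 0 j - y 0 j| < 1.
Proof.
move=> x_box y_box /(congr1 (fun z : grid u => (z j : nat)%:Z)).
rewrite !roundE // /round_coord ltr_norml; case: (e j) => kE.
  by have := ceil_itv (x 0 j); have := ceil_itv (y 0 j); rewrite kE intrD; lra.
by have := floor_itv (x 0 j); have := floor_itv (y 0 j); rewrite kE intrD; lra.
Qed.

Lemma round_ceil_at_off e j l y : in_box u y -> l != j ->
  round (ceil_at e j) y l = round e y l.
Proof.
move=> y_box lj; apply/val_inj/eqP; rewrite -eqz_nat !roundE //.
by rewrite !round_coord_floor /ceil_at (negbTE lj).
Qed.

Lemma round_ceil_at_coord e j y : in_box u y -> e j = false ->
  (round (ceil_at e j) y j : nat) = (round e y j + (y 0%R j \isn't a Num.int))%N.
Proof.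
move=> y_box ej; apply/eqP; rewrite -eqz_nat PoszD !roundE //.
by rewrite !round_coord_floor /ceil_at eqxx ej addr0.
Qed.

Lemma round_ceil_at_step e j y : in_box u y -> e j = false ->
  round (ceil_at e j) y = round e y \/ below_along j (round e y) (round (ceil_at e j) y).
Proof.
move=> y_box ej; have := round_ceil_at_coord y_box ej.
case: (boolP (y 0 j \is a Num.int)) => y_int /= coordE.
  left; apply: grid_eq => l; have [->|lj] := eqVneq l j; first by rewrite coordE addn0.
  by rewrite round_ceil_at_off.
by right; split=> [l lj|]; [rewrite round_ceil_at_off | rewrite coordE addn1].
Qed.

End Rounding.

Definition separated (R : realType) (m : nat) (C : {fset 'rV[R]_m}) : Prop :=
  forall x y, x \in C -> y \in C -> x != y -> 1 <= sup_dist x y.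

Definition grid_line_decomposition (R : realType) (m : nat) (u : 'I_m -> nat)
    (C : {fset 'rV[R]_m}) : Prop :=
  exists (A B : {fset 'rV[R]_m}) (i : 'I_m),
    [/\ C = A `|` B /\ A `&` B = fset0,
        #|` A| = ((\prod_(s < m) (u s).+1) - (u i).+1)%N,
        #|` B| = u i,
        (forall a, a \in A -> in_box u a /\ int_point a) &
        (exists x : 'rV[R]_m, int_point x /\
          forall b, b \in B -> exists t : R, b = (x + t *: delta_mx 0 i)%R)].

Section SeparatedCode.
Variables (R : realType) (m : nat) (u : 'I_m -> nat) (C : {fset 'rV[R]_m}).
Hypotheses (C_code : is_code u C) (C_sep : separated C)
  (C_card : #|` C|.+1 = #|{: grid u}|).

Lemma round_inj e : {in C &, injective (round u e)}.
Proof.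
move=> x y xC yC xy; apply/eqP; apply: contraT => /(C_sep xC yC).
by rewrite leNgt sup_dist_lt1 // => j; apply: round_close xy; apply: C_code.
Qed.

Definition is_gap e (g : grid u) := round u e @` C =i predC1 g.

Lemma gap_exists e : exists g, is_gap e g.
Proof. by have [g gP] := imfset_predC1 (@round_inj e) C_card; exists g. Qed.

Lemma gap_above e j g x : e j = false -> is_gap e g ->
  x \in C -> x 0 j \isn't a Num.int -> below_along j (round u e x) g.
Proof.
move=> ej gap xC x_nonint; have x_box := C_code xC.
apply: (missing_ahead (r' := round u (ceil_at e j)) (ahead := fun a b => below_along j b a)
  (mu := fun a : grid u => (u j - a j)%N)) xC _.
- by move=> a b c ab bc; apply: below_along_trans bc ab.
- by move=> a b [_ ab]; rewrite ltn_sub2l // (leq_trans ab) // -ltnS ltn_ord.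
- exact: round_inj.
- by move=> z zg; rewrite gap inE.
- by move=> y yC; apply: round_ceil_at_step; [apply: C_code|].
- apply/eqP => /(congr1 (fun z : grid u => z j : nat)).
  by rewrite round_ceil_at_coord // x_nonint addn1 => /eqP; rewrite eqn_leq ltnn ?andbF.
Qed.

Lemma gap_below e j g x : e j = false -> is_gap (ceil_at e j) g ->
  x \in C -> x 0 j \isn't a Num.int -> below_along j g (round u (ceil_at e j) x).
Proof.
move=> ej gap xC x_nonint; have x_box := C_code xC.
apply: (missing_ahead (r' := round u e) (ahead := below_along j)
  (mu := fun a : grid u => a j : nat)) xC _.
- exact: below_along_trans.
- by move=> a b [].
- exact: round_inj.
- by move=> z zg; rewrite gap inE.
- move=> y yC; have [->|below] := round_ceil_at_step (C_code yC) ej; [by left | by right].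
- apply/eqP => /(congr1 (fun z : grid u => z j : nat)).
  by rewrite round_ceil_at_coord // x_nonint addn1 => /eqP; rewrite eqn_leq ltnn ?andbF.
Qed.

Lemma nonint_coord_unique j k x y : x \in C -> y \in C ->
  x 0 j \isn't a Num.int -> y 0 k \isn't a Num.int -> j = k.
Proof.
move=> xC yC x_nonint y_nonint; apply/eqP; apply: contraT => jk.
have [g0 gap0] := gap_exists xpred0; have [g1 gap1] := gap_exists (ceil_at xpred0 k).
have e1j : ceil_at xpred0 k j = false by rewrite /ceil_at (negbTE jk).
have [/(_ k) x0_g0 _] := gap_above erefl gap0 xC x_nonint.
have [/(_ k) x1_g1 _] := gap_above e1j gap1 xC x_nonint.
have [_ g1_y1] := gap_below erefl gap1 yC y_nonint.
have [_ y0_g0] := gap_above erefl gap0 yC y_nonint.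
(* For the all-floor rounding [round]: via x, g0 k = round x k <= g1 k;
   via y, round y k < g0 k and g1 k < round y k + 1. *)
have x1E := round_ceil_at_coord (C_code xC) (erefl : xpred0 k = false).
have y1E := round_ceil_at_coord (C_code yC) (erefl : xpred0 k = false).
move: x0_g0 x1_g1 g1_y1 y0_g0 x1E y1E.
by rewrite eq_sym jk y_nonint => /(_ isT) <- /(_ isT) <-; lia.
Qed.

Lemma integral_off_one_coord : (0 < m)%N ->
  exists i : 'I_m, forall l x, l != i -> x \in C -> x 0 l \is a Num.int.
Proof.
move=> m_gt0.
have [/existsP [j /hasP [x xC x_nonint]] | /existsPn all_int] :=
  boolP [exists j : 'I_m, has (fun x : 'rV[R]_m => x 0 j \isn't a Num.int) C].
  exists j => l y lj yC; apply: contraT => y_nonint.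
  by move: lj; rewrite (nonint_coord_unique yC xC y_nonint x_nonint) eqxx.
by exists (Ordinal m_gt0) => l x _ xC; move/hasPn: (all_int l) => /(_ x xC); rewrite negbK.
Qed.

Section GapLine.
Variables (i : 'I_m) (g : grid u).
Hypotheses (C_int_off : forall l x, l != i -> x \in C -> x 0 l \is a Num.int)
  (g_gap : is_gap xpred0 g).

Definition on_gap_line (x : 'rV[R]_m) :=
  [forall l, (l != i) ==> (round u xpred0 x l == g l)].

Lemma nonint_on_gap_line x : x \in C -> x 0 i \isn't a Num.int -> on_gap_line x.
Proof.
move=> xC x_nonint; have [g_off _] := gap_above erefl g_gap xC x_nonint.
by apply/forallP => l; apply/implyP => li; rewrite g_off.
Qed.

Lemma card_on_gap_line : #|` [fset x in C | on_gap_line x]| = u i.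
Proof.
set B := [fset x in C | on_gap_line x].
pose f (x : 'rV[R]_m) : 'I_(u i).+1 := round u xpred0 x i.
have B_sub : {subset B <= C} by move=> x; rewrite inE => /andP [].
have round_off l x : x \in B -> l != i -> round u xpred0 x l = g l.
  by rewrite !inE => /andP [_ /forallP /(_ l) /implyP xL] /xL /eqP.
have f_inj : {in B &, injective f}.
  move=> a b aB bB ab; apply: (@round_inj xpred0); rewrite ?B_sub //.
  apply: grid_eq => l; have [->|li] := eqVneq l i; first by rewrite [LHS](congr1 val ab).
  by rewrite !round_off.
have f_img : f @` B = [fset t in predC1 (g i)].
  apply/fsetP => t; rewrite !inE; apply/imfsetP/idP => [[b bB ->] | tg].
    have : round u xpred0 b \in round u xpred0 @` C.
      by apply/imfsetP; exists b; rewrite ?B_sub.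
    rewrite g_gap inE; apply: contra_neq => fb; apply: grid_eq => l.
    by have [->|li] := eqVneq l i; [rewrite [LHS](congr1 val fb) | rewrite round_off].
  pose z : grid u := [ffun l => if l == i then inord t else g l].
  have z_off l : l != i -> z l = g l by rewrite ffunE => /negbTE ->.
  have zi : z i = t :> nat by rewrite ffunE eqxx inordK.
  have : z \in round u xpred0 @` C.
    by rewrite g_gap inE; apply: contra_neq tg => zg; apply: val_inj; rewrite /= -zi zg.
  case/imfsetP => c cC zE; exists c; last by apply: val_inj; rewrite /f -zE.
  rewrite !inE cC; apply/forallP => l; apply/implyP => li.
  by rewrite -zE z_off.
rewrite -(eqP (introT (card_in_imfsetP _ _) f_inj)) f_img card_imfset //= -cardE.
by rewrite cardC1 card_ord.
Qed.

Lemma gap_line_decomposition : grid_line_decomposition u C.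
Proof.
set B := [fset x in C | on_gap_line x]; set A := [fset x in C | ~~ on_gap_line x].
have AUB : C = A `|` B.
  by apply/fsetP => x; rewrite !inE; case: (x \in C); case: (on_gap_line x).
have AIB : A `&` B = fset0.
  by apply/fsetP => x; rewrite !inE; case: (x \in C); case: (on_gap_line x).
have round_offE l x : x \in C -> l != i -> x 0 l = (round u xpred0 x l : nat)%:R.
  by move=> xC li; apply: round_int; [apply: C_code | apply: C_int_off].
exists A, B, i; split => //.
- have := cardfsUI A B; rewrite -AUB AIB cardfs0 addn0 card_on_gap_line -card_grid -C_card.
  lia.
- exact: card_on_gap_line.
- move=> a; rewrite !inE => /andP [aC a_off]; split; first exact: C_code.
  exists (fun l => Num.floor (a 0 l)) => l; rewrite floorK //.
  have [->|li] := eqVneq l i; last exact: C_int_off.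
  by apply: contraR a_off => /(nonint_on_gap_line aC).
exists (\row_l (if l == i then 0 else (g l : nat)%:R)); split.
  by exists (fun l => if l == i then 0 else (g l : nat)%:Z) => l; rewrite mxE; case: (l == i).
move=> b; rewrite !inE => /andP [bC /forallP b_off]; exists (b 0 i).
apply/rowP => l; rewrite !mxE eqxx /=; have [->|li] := eqVneq l i.
  by rewrite mulr1 add0r.
by rewrite mulr0 addr0 (round_offE l b bC li) (eqP (implyP (b_off l) li)).
Qed.

End GapLine.

End SeparatedCode.

Lemma natr_dist_ge1 (R : realType) (p q : nat) : p != q -> 1 <= `|p%:R - q%:R : R|.
Proof.
case: ltngtP => [lt_pq|lt_qp|_] pq; last by case/negP: pq.
  by rewrite distrC -natrB ?normr_nat ?ler1n ?subn_gt0; last exact: ltnW.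
by rewrite -natrB ?normr_nat ?ler1n ?subn_gt0; last exact: ltnW.
Qed.

Lemma prod_succ_gt2 (m : nat) (u : 'I_m -> nat) j k :
  j != k -> (0 < u j)%N -> (0 < u k)%N -> (2 < \prod_(l < m) (u l).+1)%N.
Proof.
move=> jk uj uk; rewrite (bigD1 j) // (bigD1 k) 1?eq_sym //=.
have : (0 < \prod_(l < m | (l != j) && (l != k)) (u l).+1)%N by rewrite prodn_gt0.
by move: (\prod_(l < m | _) _)%N => P; nia.
Qed.

Section BoxCodes.
Variables (R : realType) (m : nat) (u : 'I_m -> nat).

Definition grid_point (z : grid u) : 'rV[R]_m := \row_l (z l : nat)%:R.

Lemma grid_point_inj : injective grid_point.
Proof.
move=> a b /rowP ab; apply: grid_eq => l.
by have /eqP := ab l; rewrite !mxE eqr_nat => /eqP.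
Qed.

Lemma grid_point_in_box z : in_box u (grid_point z).
Proof. by move=> l; rewrite mxE ler0n ler_nat -ltnS ltn_ord. Qed.

Lemma optimal_separated (C : {fset 'rV[R]_m}) :
  (2 < \prod_(l < m) (u l).+1)%N ->
  optimal_code u ((\prod_(l < m) (u l).+1) - 1)%N C -> separated C.
Proof.
move=> N_gt2 [_ _ C_opt] x y xC yC xy.
pose z0 : grid u := [ffun l => ord0].
pose G := grid_point @` [fset z in predC1 z0].
have G_code : is_code u G by move=> _ /imfsetP [z _ ->]; apply: grid_point_in_box.
have G_card : #|` G| = ((\prod_(l < m) (u l).+1) - 1)%N.
  rewrite card_imfset; last exact: grid_point_inj.
  by rewrite card_imfset //= -cardE cardC1 card_grid subn1.
apply: le_trans (delta_le xC yC xy); apply: le_trans (C_opt G G_code G_card).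
apply: delta_ge => [|_ _ /imfsetP [a _ ->] /imfsetP [b _ ->] ab].
  by rewrite G_card; lia.
have /existsP [l al] : [exists l, a l != b l].
  apply: contraR ab => /existsPn a_b; apply/eqP; congr grid_point.
  by apply/ffunP => l; have /negPn/eqP := a_b l.
apply: le_trans (le_sup_dist _ _ l); rewrite !mxE; apply: natr_dist_ge1.
by apply: contra al => /eqP ab_l; apply/eqP/val_inj.
Qed.

Lemma degenerate_decomposition (C : {fset 'rV[R]_m}) i :
  (forall l, l != i -> u l = 0%N) -> is_code u C ->
  #|` C| = ((\prod_(l < m) (u l).+1) - 1)%N -> grid_line_decomposition u C.
Proof.
move=> u_off C_code C_card.
have N_eq : (\prod_(l < m) (u l).+1 = (u i).+1)%N.
  by rewrite (bigD1 i) //= big1 ?muln1 // => l /u_off ->.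
exists fset0, C, i; split.
- by rewrite fset0U fset0I.
- by rewrite cardfs0 N_eq subnn.
- by rewrite C_card N_eq subn1.
- by move=> a; rewrite in_fset0.
exists 0; split; first by exists (fun=> 0) => l; rewrite mxE.
move=> b bC; exists (b 0 i); apply/rowP => l; rewrite !mxE eqxx /=.
have [->|li] := eqVneq l i; first by rewrite mulr1 add0r.
have /andP [b_ge0 b_le0] := C_code b bC l.
by rewrite mulr0 addr0; apply/eqP; rewrite eq_le b_ge0 andbT; move: b_le0; rewrite u_off.
Qed.

End BoxCodes.

Unset Implicit Arguments.

Theorem theorem4p5 (R : realType) (m : nat) (hm : (0 < m)%N) (u : 'I_m -> nat)
  (C : {fset 'rV[R]_m}) :
  optimal_code u ((\prod_(i < m) (u i).+1) - 1)%N C ->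
  exists (A B : {fset 'rV[R]_m}) (i : 'I_m),
    [/\ C = A `|` B /\ A `&` B = fset0,
        #|` A| = ((\prod_(s < m) (u s).+1) - (u i).+1)%N,
        #|` B| = u i,
        (forall a, a \in A -> in_box u a /\ int_point a) &
        (exists x : 'rV[R]_m, int_point x /\
          forall b, b \in B -> exists t : R, b = (x + t *: delta_mx 0 i)%R)].
Proof.
move=> C_opt; have [C_code C_card _] := C_opt.
have [/existsP [i /forallP u_off] | /existsPn u_spread] :=
  boolP [exists i, [forall l, (l != i) ==> (u l == 0%N)]].
  by apply: (degenerate_decomposition (i := i)) => // l /(implyP (u_off l)) /eqP.
have /forallPn [j] := u_spread (Ordinal hm); rewrite negb_imply -lt0n => /andP [_ uj].
have /forallPn [k] := u_spread j; rewrite negb_imply -lt0n => /andP [kj uk].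
have C_sep := optimal_separated (prod_succ_gt2 kj uk uj) C_opt.
have C_card' : #|` C|.+1 = #|{: grid u}|.
  by rewrite C_card card_grid subn1 prednK // prodn_gt0.
have [i C_int_off] := integral_off_one_coord C_code C_sep C_card' hm.
have [g g_gap] := gap_exists C_code C_sep C_card' xpred0.
exact: gap_line_decomposition C_int_off g_gap.
Qed.
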